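(* A finite simple graph $\Delta$ is invariant if and only if (a) every connected component of $\Delta$ is an invariant graph, and (b) no two distinct connected components of $\Delta$ having an odd number of edges are isomorphic.
   Context: A finite simple graph is called invariant if every graph automorphism induces an even permutation of its set of edges. *)

From mathcomp Require Import all_boot all_order all_fingroup.
Set Implicit Arguments. Unset Strict Implicit. Unset Printing Implicit Defensive.

(* A finite simple graph is a symmetric irreflexive relation [e] on a finType. *)

Definition edges (T : finType) (e : rel T) : {set {set T}} :=
  [set [set x; y] | x in [set: T], y in [set: T] & e x y].

Definition is_aut (T : finType) (e : rel T) (s : {perm T}) : Prop :=
  forall x y, e (s x) (s y) = e x y.

Definition setperm (T : finType) (s : {perm T}) : {perm {set T}} :=
  perm (imset_inj (@perm_inj T s)).

Definition edge_perm (T : finType) (e : rel T) (s : {perm T}) : {perm {set T}} :=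
  restr_perm (edges e) (setperm s).

Definition invariant_graph (T : finType) (e : rel T) : Prop :=
  forall s : {perm T}, is_aut e s -> ~~ odd_perm (edge_perm e s).

Definition components (T : finType) (e : rel T) : {set {set T}} :=
  [set [set y | connect e x y] | x : T].

Definition induced (T : finType) (e : rel T) (C : {set T}) : rel {x : T | x \in C} :=
  fun x y => e (val x) (val y).
Arguments induced {T} e C _ _.

Definition isomorphic (T1 T2 : finType) (e1 : rel T1) (e2 : rel T2) : Prop :=
  exists f : T1 -> T2, bijective f /\ forall x y, e2 (f x) (f y) = e1 x y.

(* Extending an automorphism of a component C by the identity moves only the
   edges inside C, so its edge parity is the one computed in C; exchanging two
   isomorphic components C1, C2 along an isomorphism is a product of
   #|E(C1)| disjoint transpositions of edges.  Hence both conditions are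
   necessary.  Conversely, an automorphism s moving a vertex x can be
   multiplied by an even automorphism so as to fix x and keep every fixed
   point of s: the inverse of its restriction to the component of x if s
   preserves that component, and otherwise the exchange of the components of
   x and s x along s, which is even since isomorphic components have the same
   number of edges.  Induction on the number of moved vertices concludes. *)

From mathcomp Require Import all_boot all_order all_fingroup.
Set Implicit Arguments. Unset Strict Implicit. Unset Printing Implicit Defensive.
Import GroupScope.

Lemma imset_set2 (A B : finType) (f : A -> B) x y :
  f @: [set x; y] = [set f x; f y].
Proof. by rewrite imsetU !imset_set1. Qed.

Lemma tperm_map (A U : finType) (f : A -> U) x y a : injective f ->
  tperm (f x) (f y) (f a) = f (tperm x y a).
Proof.
move=> f_inj; case: (tpermP x y a) => [->|->|/eqP ax /eqP ay].
- exact: tpermL.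
- exact: tpermR.
by rewrite tpermD // (inj_eq f_inj) eq_sym.
Qed.

Lemma odd_perm_transfer (A U : finType) (f : A -> U) (p : {perm A}) (P : {perm U}) :
    injective f -> (forall a, P (f a) = f (p a)) ->
    (forall u, u \notin codom f -> P u = u) ->
  odd_perm P = odd_perm p.
Proof.
move=> f_inj; have [ts -> _] := prod_tpermP p.
elim: ts P => [|[x y] ts IHts] P /= Pf Pout.
  suff -> : P = 1 by rewrite big_nil !odd_perm1.
  apply/permP => u; rewrite perm1; have [/codomP[a ->]|] := boolP (u \in codom f).
    by rewrite Pf big_nil perm1.
  exact: Pout.
rewrite big_cons odd_mul_tperm -(IHts (tperm (f x) (f y) * P)).
- by rewrite odd_mul_tperm (inj_eq f_inj) addbA addbb.
- by move=> a; rewrite permM tperm_map // Pf big_cons permM tpermK.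
move=> u u_f; rewrite permM tpermD ?Pout //.
  by apply: contraNneq u_f => <-; apply: codom_f.
by apply: contraNneq u_f => <-; apply: codom_f.
Qed.

(* The hypotheses say that [t] is the product of the disjoint transpositions
   [(u, t u)] for [u] in [E]. *)
Lemma odd_perm_swaps (U : finType) (E : {set U}) (t : {perm U}) :
    (forall u, u \in E -> t u \notin E /\ t (t u) = u) ->
    (forall u, u \notin E -> t u \notin E -> t u = u) ->
  odd_perm t = odd #|E|.
Proof.
move cardE : #|E| => n; elim: n E t cardE => [|n IHn] E t cardE swapE fixE.
  have E0 : E = set0 by apply/eqP; rewrite -cards_eq0 cardE.
  suff -> : t = 1 by rewrite odd_perm1.
  by apply/permP => u; rewrite perm1 fixE // E0 inE.
have [a Ea] : exists a, a \in E by apply/card_gt0P; rewrite cardE.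
have [tEa tta] := swapE a Ea.
pose t' := t * tperm a (t a).
have tu_a u : (t u == a) = (u == t a) by rewrite -{1}tta (inj_eq perm_inj).
have t'E u : u != a -> u != t a -> t' u = t u.
  move=> ua uta; rewrite permM tpermD //; first by rewrite eq_sym tu_a.
  by rewrite eq_sym (inj_eq perm_inj).
have a_ta : a != t a by apply: contraNneq tEa => <-.
have -> : t = t' * tperm a (t a) by rewrite -mulgA tperm2 mulg1.
rewrite odd_permM odd_tperm a_ta (IHn (E :\ a)) ?addbT //.
- by move: cardE; rewrite (cardsD1 a) Ea => -[].
- move=> u; rewrite !inE => /andP[ua Eu]; have [tEu ttu] := swapE u Eu.
  have uta : u != t a by apply: contraNneq tEa => <-.
  rewrite t'E // t'E ?ttu ?(negPf tEu) ?andbF //.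
    by rewrite tu_a.
  by rewrite (inj_eq perm_inj).
move=> u; have [-> _ _ | ua] := eqVneq u a; first by rewrite permM tpermR.
have [-> _ _ | uta] := eqVneq u (t a); first by rewrite permM tta tpermL.
rewrite !inE ua /= t'E // tu_a uta /=; exact: fixE.
Qed.

Definition moved (T : finType) (s : {perm T}) := [set x | s x != x].

Lemma card_moved_lt (T : finType) (s s' : {perm T}) x :
  (forall y, s y = y -> s' y = y) -> s x != x -> s' x = x -> #|moved s'| < #|moved s|.
Proof.
move=> fix_s' sx s'x; apply: proper_card; apply/properP; split.
  by apply/subsetP => y; rewrite !inE; apply: contra => /eqP/fix_s' ->.
by exists x; rewrite !inE ?sx ?s'x ?eqxx.
Qed.

Section Automorphisms.
Variables (T : finType) (e : rel T).

Lemma in_edgesP A : reflect (exists x y, e x y /\ A = [set x; y]) (A \in edges e).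
Proof.
apply: (iffP imset2P) => [[x y _] | [x [y [exy ->]]]].
  by rewrite inE => /andP[_ exy] ->; exists x, y.
by exists x y; rewrite ?inE ?exy.
Qed.

Lemma is_aut1 : is_aut e 1.
Proof. by move=> x y; rewrite !perm1. Qed.

Lemma is_autV s : is_aut e s -> is_aut e s^-1.
Proof. by move=> aut_s x y; rewrite -aut_s !permKV. Qed.

Lemma is_autM s t : is_aut e s -> is_aut e t -> is_aut e (s * t).
Proof. by move=> aut_s aut_t x y; rewrite !permM aut_t aut_s. Qed.

Lemma aut_imset_edges s (A : {set T}) :
  is_aut e s -> (s @: A \in edges e) = (A \in edges e).
Proof.
have sub t (B : {set T}) : is_aut e t -> B \in edges e -> t @: B \in edges e.
  move=> aut_t /in_edgesP[x [y [exy ->]]]; apply/in_edgesP.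
  by exists (t x), (t y); rewrite aut_t imset_set2.
move=> aut_s; apply/idP/idP => [/(sub _ _ (is_autV aut_s))|]; last exact: sub.
by rewrite -imset_comp (eq_imset _ (permK s)) imset_id.
Qed.

Lemma edge_permE s (A : {set T}) : is_aut e s ->
  edge_perm e s A = if A \in edges e then s @: A else A.
Proof.
move=> aut_s; rewrite /edge_perm; case: ifP => [EA | /negbT nEA].
  rewrite restr_permE //; first by rewrite /setperm permE.
  by apply/astabsP => B; rewrite /= /aperm /setperm permE aut_imset_edges.
exact: out_perm (restr_perm_on _ _) nEA.
Qed.

Lemma edge_perm1 : edge_perm e 1 = 1.
Proof.
apply/permP => A; rewrite perm1 (edge_permE _ is_aut1); case: ifP => // _.
by rewrite (eq_imset _ (@perm1 _)) imset_id.
Qed.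

Lemma edge_permM s t : is_aut e s -> is_aut e t ->
  edge_perm e (s * t) = edge_perm e s * edge_perm e t.
Proof.
move=> aut_s aut_t; have aut_st := is_autM aut_s aut_t.
apply/permP => A; rewrite permM !edge_permE //; case: ifP => EA; last by rewrite EA.
by rewrite aut_imset_edges // EA -imset_comp; apply: eq_imset => x; rewrite permM.
Qed.

Lemma connect_aut s x y : is_aut e s -> connect e (s x) (s y) = connect e x y.
Proof.
have homo t a b : is_aut e t -> connect e a b -> connect e (t a) (t b).
  move=> aut_t /connectP[p e_p ->]; apply/connectP; exists (map t p).
    by apply: homo_path e_p => u v; rewrite aut_t.
  by rewrite last_map.
move=> aut_s; apply/idP/idP => [/(homo _ _ _ (is_autV aut_s))|]; last exact: homo.
by rewrite !permK.
Qed.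

End Automorphisms.

Lemma isomorphic_card_edges (T1 T2 : finType) (e1 : rel T1) (e2 : rel T2) :
  isomorphic e1 e2 -> #|edges e1| = #|edges e2|.
Proof.
case=> f [f_bij f_iso]; have [g fK gK] := f_bij.
rewrite -(card_imset _ (imset_inj (bij_inj f_bij))); apply: eq_card => B.
apply/imsetP/in_edgesP => [[A /in_edgesP[x [y [exy ->]]] ->] | [x [y [exy ->]]]].
  by exists (f x), (f y); rewrite f_iso imset_set2.
exists [set g x; g y]; last by rewrite imset_set2 !gK.
by apply/in_edgesP; exists (g x), (g y); rewrite -f_iso !gK.
Qed.

Section InducedEdges.
Variables (T : finType) (e : rel T) (C : {set T}).

Lemma imset_val_edges (A : {set {x | x \in C}}) :
  (val @: A \in edges e) = (A \in edges (induced e C)).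
Proof.
apply/in_edgesP/in_edgesP => [[x [y [exy AE]]] | [u [v [euv ->]]]]; last first.
  by exists (val u), (val v); rewrite imset_set2.
have /imsetP[u _ xu] : x \in val @: A by rewrite AE set21.
have /imsetP[v _ yv] : y \in val @: A by rewrite AE set22.
exists u, v; split; first by rewrite /induced -xu -yv.
by apply: (imset_inj val_inj); rewrite AE imset_set2 xu yv.
Qed.

Lemma subset_imset_val (B : {set T}) :
  B \subset C -> B = val @: [set u : {x | x \in C} | val u \in B].
Proof.
move=> BC; apply/setP => z; apply/idP/imsetP => [zB | [u]]; last by rewrite inE => ? ->.
by exists (exist _ z (subsetP BC z zB)); rewrite ?inE.
Qed.

Lemma card_edges_induced :
  #|edges (induced e C)| = #|[set A in edges e | A \subset C]|.
Proof.
rewrite -(card_imset _ (imset_inj val_inj)); apply: eq_card => B.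
rewrite inE; apply/imsetP/andP => [[A EA ->] | [EB BC]].
  rewrite imset_val_edges; split => //.
  by apply/subsetP => _ /imsetP[u _ ->]; apply: valP.
by exists [set u | val u \in B]; rewrite -?imset_val_edges -subset_imset_val.
Qed.

End InducedEdges.

Section Components.
Variables (T : finType) (e : rel T).
Hypothesis e_sym : symmetric e.

Definition component x := [set y | connect e x y].

Lemma component_in x : component x \in components e.
Proof. exact: imset_f. Qed.

Lemma mem_component x : x \in component x.
Proof. by rewrite inE connect0. Qed.

Lemma component_eq x y : y \in component x -> component y = component x.
Proof.
rewrite inE => cxy; apply/setP => z; rewrite !inE.
by rewrite (same_connect (sym_connect_sym e_sym) cxy).
Qed.

Lemma componentsP C x : C \in components e -> x \in C -> C = component x.
Proof. by case/imsetP => y _ -> /component_eq. Qed.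

Lemma components_disjoint C1 C2 x : C1 \in components e -> C2 \in components e ->
  C1 != C2 -> x \in C1 -> x \notin C2.
Proof.
move=> C1c C2c C12 xC1; apply: contra C12 => xC2; apply/eqP.
by rewrite (componentsP C1c xC1) (componentsP C2c xC2).
Qed.

Lemma edge_component C x y : C \in components e -> e x y -> (x \in C) = (y \in C).
Proof.
have closed a b D : D \in components e -> e a b -> a \in D -> b \in D.
  by move=> Dc eab aD; rewrite (componentsP Dc aD) inE connect1.
move=> Cc exy; apply/idP/idP; first exact: closed.
by apply: closed; rewrite // e_sym.
Qed.

Lemma edge_componentF C x y : C \in components e ->
  (x \in C) != (y \in C) -> e x y = false.
Proof. by move=> Cc; apply: contraNF => /(edge_component Cc) ->. Qed.

Lemma edge_map_separated (f : T -> T) C D x y :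
    C \in components e -> D \in components e ->
    (forall z, (f z \in D) = (z \in C)) -> (x \in C) != (y \in C) ->
  e (f x) (f y) = e x y.
Proof.
move=> Cc Dc fCD xy; rewrite (edge_componentF Cc xy) (edge_componentF Dc) //.
by rewrite !fCD.
Qed.

Lemma edge_subset_component C A x : C \in components e -> A \in edges e ->
  x \in A -> (A \subset C) = (x \in C).
Proof.
move=> Cc /in_edgesP[a [b [eab ->]]]; rewrite subUset !sub1set.
rewrite -(edge_component Cc eab) andbb.
by case/set2P=> ->; rewrite ?(edge_component Cc eab).
Qed.

Lemma mem_component_aut s x y : is_aut e s ->
  (s y \in component (s x)) = (y \in component x).
Proof. by move=> aut_s; rewrite !inE connect_aut. Qed.

End Components.

Section SubMap.
Variables (T : finType) (f : T -> T) (C D : {set T}).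
Hypothesis fCD : forall x, (f x \in D) = (x \in C).

Definition submap (u : {x | x \in C}) : {x | x \in D} :=
  exist _ (f (val u)) (etrans (fCD (val u)) (valP u)).

Lemma submap_inj : injective f -> injective submap.
Proof. by move=> f_inj u v [/f_inj /val_inj]. Qed.

End SubMap.

Section Extension.
Variables (T : finType) (e : rel T) (C : {set T}).
Hypotheses (e_sym : symmetric e) (Cc : C \in components e).

Definition ext_fun (s : {perm {x | x \in C}}) x :=
  if insub x is Some u then val (s u) else x.

Lemma ext_funK s : cancel (ext_fun s) (ext_fun s^-1).
Proof.
move=> x; rewrite /ext_fun; case: (@insubP _ _ {x | x \in C} x) => [u _ <- | xNC].
  by rewrite valK permK.
by rewrite insubN.
Qed.

Definition ext s : {perm T} := perm (can_inj (ext_funK s)).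

Lemma ext_val s u : ext s (val u) = val (s u).
Proof. by rewrite permE /ext_fun valK. Qed.

Lemma ext_out s x : x \notin C -> ext s x = x.
Proof. by move=> xNC; rewrite permE /ext_fun insubN. Qed.

Lemma ext_in s x (xC : x \in C) : ext s x = val (s (exist _ x xC)).
Proof. exact: ext_val (exist _ x xC). Qed.

Lemma mem_ext s x : (ext s x \in C) = (x \in C).
Proof.
have [xC | xNC] := boolP (x \in C); first by rewrite ext_in (valP (s _)).
by rewrite ext_out // (negPf xNC).
Qed.

Lemma ext_aut s : is_aut (induced e C) s -> is_aut e (ext s).
Proof.
move=> aut_s x y.
have [xy | /negPn/eqP xy] := boolP ((x \in C) != (y \in C)).
  exact: (edge_map_separated e_sym Cc Cc (mem_ext s) xy).
have [xC | xNC] := boolP (x \in C).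
  have yC : y \in C by rewrite -xy.
  by rewrite (ext_in _ xC) (ext_in _ yC); apply: aut_s.
by rewrite !ext_out // -xy.
Qed.

Lemma odd_edge_perm_ext s : is_aut (induced e C) s ->
  odd_perm (edge_perm e (ext s)) = odd_perm (edge_perm (induced e C) s).
Proof.
move=> aut_s; have aut_es := ext_aut aut_s.
apply: (odd_perm_transfer (imset_inj val_inj)) => [A | B BN].
  rewrite !edge_permE // imset_val_edges; case: ifP => // _.
  by rewrite -!imset_comp; apply: eq_imset => u /=; rewrite ext_val.
rewrite edge_permE //; case: ifP => // EB; have /in_edgesP[a [b [eab Bab]]] := EB.
have aNC : a \notin C.
  apply: contra BN => aC.
  have BC : B \subset C.
    by rewrite (edge_subset_component (x := a) e_sym Cc EB) // Bab set21.
  by rewrite {1}(subset_imset_val BC) codom_f.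
have bNC : b \notin C by rewrite -(edge_component e_sym Cc eab).
by rewrite Bab imset_set2 !ext_out.
Qed.

End Extension.

Section Swap.
Variables (T : finType) (e : rel T) (C1 C2 : {set T}).
Hypothesis e_sym : symmetric e.
Hypotheses (C1c : C1 \in components e) (C2c : C2 \in components e) (C12 : C1 != C2).
Variables (h : {x | x \in C1} -> {x | x \in C2}).
Variables (h' : {x | x \in C2} -> {x | x \in C1}).
Hypotheses (hK : cancel h h') (h'K : cancel h' h).

Let C2_notin_C1 x : x \in C2 -> x \notin C1.
Proof. by apply: contraTN => /(components_disjoint e_sym C1c C2c C12). Qed.

Definition swap_fun x :=
  if insub x is Some u then val (h u) else if insub x is Some v then val (h' v) else x.

Lemma swap_fun_val1 u : swap_fun (val u) = val (h u).
Proof. by rewrite /swap_fun valK. Qed.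

Lemma swap_fun_val2 v : swap_fun (val v) = val (h' v).
Proof. by rewrite /swap_fun insubN ?valK // C2_notin_C1 ?(valP v). Qed.

Lemma swap_fun_out x : x \notin C1 -> x \notin C2 -> swap_fun x = x.
Proof. by move=> xNC1 xNC2; rewrite /swap_fun !insubN. Qed.

Lemma swap_funK : involutive swap_fun.
Proof.
move=> x; have [xC1 | xNC1] := boolP (x \in C1).
  have -> : x = val (exist _ x xC1 : {y | y \in C1}) by [].
  by rewrite swap_fun_val1 swap_fun_val2 hK.
have [xC2 | xNC2] := boolP (x \in C2); last by rewrite !swap_fun_out.
have -> : x = val (exist _ x xC2 : {y | y \in C2}) by [].
by rewrite swap_fun_val2 swap_fun_val1 h'K.
Qed.

Definition swap : {perm T} := perm (inv_inj swap_funK).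

Lemma swapE x : swap x = swap_fun x.
Proof. by rewrite permE. Qed.

Lemma swapK : involutive swap.
Proof. by move=> x; rewrite !swapE swap_funK. Qed.

Lemma swap_out x : x \notin C1 -> x \notin C2 -> swap x = x.
Proof. by move=> xNC1 xNC2; rewrite swapE swap_fun_out. Qed.

Lemma swap_in1 x (xC1 : x \in C1) : swap x = val (h (exist _ x xC1)).
Proof. by rewrite swapE -swap_fun_val1. Qed.

Lemma swap_in2 x (xC2 : x \in C2) : swap x = val (h' (exist _ x xC2)).
Proof. by rewrite swapE -swap_fun_val2. Qed.

Lemma mem_swap2 x : (swap x \in C2) = (x \in C1).
Proof.
have [xC1 | xNC1] := boolP (x \in C1); first by rewrite (swap_in1 xC1) (valP (h _)).
have [xC2 | xNC2] := boolP (x \in C2); last by rewrite swap_out // (negPf xNC2).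
by rewrite (swap_in2 xC2); apply/negbTE/(components_disjoint e_sym C1c C2c C12)/valP.
Qed.

Lemma mem_swap1 x : (swap x \in C1) = (x \in C2).
Proof. by rewrite -mem_swap2 swapK. Qed.

Hypothesis h_iso : forall u v, induced e C2 (h u) (h v) = induced e C1 u v.

Lemma swap_aut : is_aut e swap.
Proof.
move=> x y.
have [xy1 | /negPn/eqP xy1] := boolP ((x \in C1) != (y \in C1)).
  exact: (edge_map_separated e_sym C1c C2c mem_swap2 xy1).
have [xy2 | /negPn/eqP xy2] := boolP ((x \in C2) != (y \in C2)).
  exact: (edge_map_separated e_sym C2c C1c mem_swap1 xy2).
have [xC1 | xNC1] := boolP (x \in C1).
  have yC1 : y \in C1 by rewrite -xy1.
  by rewrite (swap_in1 xC1) (swap_in1 yC1); apply: h_iso.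
have [xC2 | xNC2] := boolP (x \in C2).
  have yC2 : y \in C2 by rewrite -xy2.
  have h'_iso u v : induced e C1 (h' u) (h' v) = induced e C2 u v.
    by rewrite -h_iso !h'K.
  by rewrite (swap_in2 xC2) (swap_in2 yC2); apply: h'_iso.
by rewrite !swap_out // -?xy1 -?xy2.
Qed.

Lemma odd_edge_perm_swap : odd_perm (edge_perm e swap) = odd #|edges (induced e C1)|.
Proof.
have aut_sw := swap_aut.
have swap_subset_C1 A a : A \in edges e -> a \in A ->
    (swap @: A \subset C1) = (a \in C2).
  move=> EA aA; rewrite -mem_swap1.
  by rewrite (edge_subset_component e_sym C1c _ (imset_f swap aA)) ?aut_imset_edges.
rewrite card_edges_induced; apply: odd_perm_swaps => A.
  rewrite inE => /andP[EA AC1]; have /in_edgesP[a [b [_ Aab]]] := EA.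
  have aA : a \in A by rewrite Aab set21.
  have aC1 : a \in C1 by rewrite -(edge_subset_component e_sym C1c EA aA).
  rewrite !edge_permE // EA aut_imset_edges // EA inE aut_imset_edges // EA.
  rewrite (swap_subset_C1 _ a) // (negPf (components_disjoint e_sym C1c C2c C12 aC1)).
  by rewrite -imset_comp (eq_imset _ swapK) imset_id.
rewrite edge_permE //; case: ifP => // EA.
rewrite !inE EA aut_imset_edges // EA /=; have /in_edgesP[a [b [eab Aab]]] := EA.
have aA : a \in A by rewrite Aab set21.
rewrite (swap_subset_C1 _ a) // (edge_subset_component e_sym C1c EA aA) => aNC1 aNC2.
have bNC1 : b \notin C1 by rewrite -(edge_component e_sym C1c eab).
have bNC2 : b \notin C2 by rewrite -(edge_component e_sym C2c eab).
by rewrite Aab imset_set2 !swap_out.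
Qed.

End Swap.

Section Sufficiency.
Variables (T : finType) (e : rel T).
Hypothesis e_sym : symmetric e.
Hypothesis components_invariant :
  forall C, C \in components e -> invariant_graph (induced e C).
Hypothesis odd_components_nonisomorphic :
  forall C1 C2, C1 \in components e -> C2 \in components e -> C1 != C2 ->
    odd #|edges (induced e C1)| -> odd #|edges (induced e C2)| ->
    ~ isomorphic (induced e C1) (induced e C2).

Lemma reduce_in_component s x : is_aut e s -> connect e x (s x) ->
  exists2 s', is_aut e s' & [/\ s' x = x, forall y, s y = y -> s' y = y &
    odd_perm (edge_perm e s') = odd_perm (edge_perm e s)].
Proof.
move=> aut_s cx; set C := component e x.
have Cc : C \in components e := component_in e x.
have sC y : (s y \in C) = (y \in C).
  have Csx : component e (s x) = C by apply: component_eq; rewrite // inE.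
  by rewrite -{1}Csx mem_component_aut.
pose sg := perm (submap_inj (fCD := sC) (@perm_inj _ s)).
have aut_sg : is_aut (induced e C) sg by move=> u v; rewrite /induced !permE /= aut_s.
have ext_sgE y : ext sg y = if y \in C then s y else y.
  by case: ifPn => [yC | yNC]; [rewrite (ext_in _ yC) permE | exact: ext_out].
have aut_ext := ext_aut e_sym Cc aut_sg.
pose s' := s * (ext sg)^-1.
have s'E y : s' y = if y \in C then y else s y.
  rewrite permM; apply: (canLR (permK (ext sg))).
  by case: ifPn => yC; rewrite ext_sgE ?sC ?yC ?(negPf yC).
have aut_s' : is_aut e s' by apply: is_autM aut_s (is_autV aut_ext).
exists s' => //; split.
- by rewrite s'E mem_component.
- by move=> y sy; rewrite s'E sy; case: ifP.
rewrite -[in RHS](mulgVK (ext sg) s) -/s' [in RHS]edge_permM // odd_permM.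
by rewrite odd_edge_perm_ext // (negbTE (components_invariant Cc aut_sg)) addbF.
Qed.

Lemma reduce_swap s x : is_aut e s -> ~~ connect e x (s x) ->
  exists2 s', is_aut e s' & [/\ s' x = x, forall y, s y = y -> s' y = y &
    odd_perm (edge_perm e s') = odd_perm (edge_perm e s)].
Proof.
move=> aut_s ncx; set C1 := component e x; set C2 := component e (s x).
have C1c : C1 \in components e := component_in e x.
have C2c : C2 \in components e := component_in e (s x).
have C12 : C1 != C2.
  by apply: contraNneq ncx => C12; move: (mem_component e (s x)); rewrite -/C2 -C12 inE.
have sC y : (s y \in C2) = (y \in C1) := mem_component_aut x y aut_s.
have sC' y : (s^-1 y \in C1) = (y \in C2) by rewrite -sC permKV.
pose h := submap sC; pose h' := submap sC'.
have hK : cancel h h' by move=> u; apply: val_inj; rewrite /= permK.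
have h'K : cancel h' h by move=> v; apply: val_inj; rewrite /= permKV.
have h_iso u v : induced e C2 (h u) (h v) = induced e C1 u v by apply: aut_s.
pose t := swap e_sym C1c C2c C12 hK h'K.
have aut_t : is_aut e t := swap_aut e_sym C1c C2c C12 hK h'K h_iso.
have even_t : ~~ odd_perm (edge_perm e t).
  rewrite odd_edge_perm_swap //; apply/negP => odd1.
  have iso : isomorphic (induced e C1) (induced e C2).
    by exists h; split; [exact: Bijective hK h'K | exact: h_iso].
  apply: (odd_components_nonisomorphic C1c C2c C12 odd1 _ iso).
  by rewrite -(isomorphic_card_edges iso).
have tC2 y (yC2 : y \in C2) : t y = s^-1 y := swap_in2 e_sym C1c C2c C12 hK h'K yC2.
exists (s * t); first exact: is_autM.
split.
- by rewrite permM tC2 ?permK // mem_component.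
- move=> y sy; rewrite permM sy.
  have [yC2 | yNC2] := boolP (y \in C2); first by rewrite tC2 // -{1}sy permK.
  by rewrite (swap_out e_sym C1c C2c C12 hK h'K) // -sC sy.
by rewrite edge_permM // odd_permM (negbTE even_t) addbF.
Qed.

Lemma invariant_of_components : invariant_graph e.
Proof.
move=> s; elim: {s}_.+1 {-2}s (ltnSn #|moved s|) => // n IHn s lt_s_n aut_s.
have [fix_s | [x]] := set_0Vmem (moved s); last rewrite inE => sx.
  suff -> : s = 1 by rewrite edge_perm1 odd_perm1.
  by apply/permP => y; apply/eqP; move/setP/(_ y): fix_s; rewrite !inE perm1 => /negbFE.
have [/(reduce_in_component aut_s) | /(reduce_swap aut_s)] := boolP (connect e x (s x));
  case=> s' aut_s' [s'x fix_s' <-]; apply: IHn aut_s';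
  exact: leq_trans (card_moved_lt fix_s' sx s'x) lt_s_n.
Qed.

End Sufficiency.

Theorem lemma2p10 (T : finType) (e : rel T)
    (e_sym : symmetric e) (e_irr : irreflexive e) :
  invariant_graph e <->
  ((forall C, C \in components e -> invariant_graph (induced e C)) /\
   (forall C1 C2, C1 \in components e -> C2 \in components e -> C1 != C2 ->
      odd #|edges (induced e C1)| -> odd #|edges (induced e C2)| ->
      ~ isomorphic (induced e C1) (induced e C2))).
Proof.
split=> [inv | [comps_inv odd_noniso]]; last first.
  exact: invariant_of_components e_sym comps_inv odd_noniso.
split=> [C Cc sg aut_sg | C1 C2 C1c C2c C12 odd1 _ [h [[h' hK h'K] h_iso]]].
  by rewrite -(odd_edge_perm_ext e_sym Cc aut_sg); apply/inv/ext_aut.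
have := inv _ (swap_aut e_sym C1c C2c C12 hK h'K h_iso).
by rewrite (odd_edge_perm_swap e_sym C1c C2c C12 hK h'K h_iso) odd1.
Qed.
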